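(* Let $\mathbf{FT}$ denote the category whose objects are the finite games that are trivial for Alice and whose morphisms are game embeddings. There is a Fraïssé sequence $F\colon\omega\to\mathbf{FT}$ — i.e. (U) every object $X$ of $\mathbf{FT}$ admits a game embedding $X\to F(n)$ for some $n$, and (A) for every $n$ and every game embedding $f\colon F(n)\to X$ with $X$ in $\mathbf{FT}$ there are $m\ge n$ and a game embedding $g\colon X\to F(m)$ with $g\circ f=F_n^m$ — whose colimit in $\mathbf{Games}_A$ is $G_{FL}=(\omega^{<\omega},c_{00}(\omega))$.
   Context: A game tree is $T\subseteq M^{<\omega}$ (some set $M$) closed under initial segments such that every $t\in T$ has an extension $t^\frown x\in T$; $|t|$ is the length, $t\restriction k$ the initial segment of length $k$. $\mathrm{Run}(T)=\{R\in M^\omega:R\restriction n\in T\ \forall n\}$. A game is $(T,A)$ with $A\subseteq\mathrm{Run}(T)$; finite if $\mathrm{Run}(T)$ is finite; trivial for Alice if $A=\mathrm{Run}(T)$. A chronological map $f\colon T_1\to T_2$ satisfies $|f(t)|=|t|$, $f(t\restriction k)=f(t)\restriction k$, inducing $\bar f$ on runs via $\bar f(R)\restriction n=f(R\restriction n)$. $\mathbf{Games}_A$ is the category of games with A-morphisms (chronological $f$ with $\bar f[A_1]\subseteq A_2$). A game embedding is an injective chronological $f$ with $\bar f(R)\in A_2\iff R\in A_1$ for all runs $R$. $\omega$ is a category via its order and $F_n^m=F(n\le m)$. $c_{00}(\omega)$ is the set of eventually zero sequences in $\omega^\omega$. *)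

From mathcomp Require Import all_boot.
Set Implicit Arguments. Unset Strict Implicit. Unset Printing Implicit Defensive.

(* A game tree over M: a set of finite sequences closed under initial segments
   in which every node has an immediate extension; the game has a set A of
   winning runs (for Alice) included in the set of runs. *)
Record Game (M : Type) := MkGame {
  tree : seq M -> Prop;
  acc : (nat -> M) -> Prop;
  tree_closed : forall t k, tree t -> tree (take k t);
  tree_ext : forall t, tree t -> exists x, tree (rcons t x);
  acc_runs : forall R, acc R -> forall n, tree (mkseq R n)
}.

(* R restricted to n is mkseq R n = [:: R 0; ...; R n.-1]. *)
Definition Run (M : Type) (G : Game M) (R : nat -> M) : Prop :=
  forall n, tree G (mkseq R n).

(* Finite game: Run(T) is finite (runs compared extensionally). *)
Definition finite_game (M : Type) (G : Game M) : Prop :=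
  exists (N : nat) (e : nat -> nat -> M),
    forall R, Run G R -> exists2 i, i < N & forall k, R k = e i k.

Definition trivial_for_Alice (M : Type) (G : Game M) : Prop :=
  forall R, Run G R -> acc G R.

Definition FT_obj (M : Type) (G : Game M) : Prop :=
  finite_game G /\ trivial_for_Alice G.

(* Chronological map T1 -> T2 (only its values on T1 matter). *)
Definition chronological (M1 M2 : Type) (G1 : Game M1) (G2 : Game M2)
  (f : seq M1 -> seq M2) : Prop :=
  forall t, tree G1 t ->
    [/\ tree G2 (f t), size (f t) = size t &
        forall k, f (take k t) = take k (f t)].

Definition induced_run (M1 M2 : Type) (f : seq M1 -> seq M2)
  (R : nat -> M1) (S : nat -> M2) : Prop :=
  forall n, f (mkseq R n) = mkseq S n.

Definition A_morphism (M1 M2 : Type) (G1 : Game M1) (G2 : Game M2)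
  (f : seq M1 -> seq M2) : Prop :=
  chronological G1 G2 f /\
  forall R S, acc G1 R -> induced_run f R S -> acc G2 S.

Definition game_embedding (M1 M2 : Type) (G1 : Game M1) (G2 : Game M2)
  (f : seq M1 -> seq M2) : Prop :=
  [/\ chronological G1 G2 f,
      (forall s t, tree G1 s -> tree G1 t -> f s = f t -> s = t) &
      forall R S, Run G1 R -> induced_run f R S -> (acc G1 R <-> acc G2 S)].

Definition eq_on (M1 M2 : Type) (G : Game M1) (f g : seq M1 -> seq M2) : Prop :=
  forall t, tree G t -> f t = g t.

Definition c00 (R : nat -> nat) : Prop := exists N, forall k, N <= k -> R k = 0.

Lemma GFL_closed : forall (t : seq nat) (k : nat), True -> True.
Proof. by []. Qed.

Lemma GFL_ext : forall (t : seq nat), True -> exists x : nat, True.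
Proof. by move=> _ _; exists 0. Qed.

Lemma GFL_runs : forall R, c00 R -> forall n : nat, True.
Proof. by []. Qed.

Definition G_FL : Game nat :=
  @MkGame nat (fun _ => True) c00 GFL_closed GFL_ext GFL_runs.

(* A functor F : omega -> FT, given by objects F n over sets M n and maps
   Fmap n m = F_n^m (only used for n <= m). *)
Definition functor_omega_FT (M : nat -> Type) (F : forall n, Game (M n))
  (Fmap : forall n m, seq (M n) -> seq (M m)) : Prop :=
  [/\ (forall n, FT_obj (F n)),
      (forall n m, n <= m -> game_embedding (F n) (F m) (Fmap n m)),
      (forall n, eq_on (F n) (Fmap n n) id) &
      (forall n m k, n <= m -> m <= k ->
         eq_on (F n) (fun t => Fmap m k (Fmap n m t)) (Fmap n k))].

Definition fraisse_sequence (M : nat -> Type) (F : forall n, Game (M n))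
  (Fmap : forall n m, seq (M n) -> seq (M m)) : Prop :=
  functor_omega_FT F Fmap /\
  (forall (N : Type) (X : Game N), FT_obj X ->
     exists n (g : seq N -> seq (M n)), game_embedding X (F n) g) /\
  (forall n (N : Type) (X : Game N) (f : seq (M n) -> seq N),
     FT_obj X -> game_embedding (F n) X f ->
     exists m (g : seq N -> seq (M m)),
       [/\ n <= m, game_embedding X (F m) g &
           eq_on (F n) (fun t => g (f t)) (Fmap n m)]).

Definition is_colimit_GamesA (M : nat -> Type) (F : forall n, Game (M n))
  (Fmap : forall n m, seq (M n) -> seq (M m))
  (C : Type) (GC : Game C) (phi : forall n, seq (M n) -> seq C) : Prop :=
  [/\ (forall n, A_morphism (F n) GC (phi n)),
      (forall n m, n <= m -> eq_on (F n) (fun t => phi m (Fmap n m t)) (phi n)) &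
      (forall (N : Type) (H : Game N) (psi : forall n, seq (M n) -> seq N),
         (forall n, A_morphism (F n) H (psi n)) ->
         (forall n m, n <= m -> eq_on (F n) (fun t => psi m (Fmap n m t)) (psi n)) ->
         exists h : seq C -> seq N,
           [/\ A_morphism GC H h,
               (forall n, eq_on (F n) (fun t => h (phi n t)) (psi n)) &
               (forall h' : seq C -> seq N, A_morphism GC H h' ->
                  (forall n, eq_on (F n) (fun t => h' (phi n t)) (psi n)) ->
                  eq_on GC h' h)])].

(* The n-th game F(n) consists of the sequences with entries at most n that
   vanish from position n on, with every run winning; the bonding maps are
   inclusions, so the colimit is their union omega^{<omega}, in which the
   runs coming from some F(n) are exactly the eventually zero sequences.
   To extend an embedding f of F(n) into a finite game X to an embedding of X
   into some F(m), label each node of X: a node in the image of f by the last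
   entry of its preimage, any other node by n + 1 + the index of a run through
   it, and nodes deeper than m = n + #runs + L by 0, where L is a depth past
   which the finitely many runs of X no longer split.  Siblings then get
   distinct labels, so reading off the labels along a node embeds X into F(m). *)

From mathcomp Require Import all_boot zify.
From Stdlib Require Import Classical ClassicalEpsilon.

Set Implicit Arguments.
Unset Strict Implicit.
Unset Printing Implicit Defensive.

Definition bounded (n : nat) (t : seq nat) : Prop :=
  forall j, j < size t -> nth 0 t j <= n /\ (n <= j -> nth 0 t j = 0).

Lemma bounded_take n t k : bounded n t -> bounded n (take k t).
Proof.
move=> Ht j; rewrite size_take_min => Hj.
by rewrite nth_take; [apply: Ht|]; lia.
Qed.

Lemma bounded_ext n t : bounded n t -> exists x, bounded n (rcons t x).
Proof.
move=> Ht; exists 0 => j; rewrite size_rcons ltnS nth_rcons => Hj.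
case: ltnP => Hjt; first exact: Ht.
by rewrite (_ : j == size t) //; apply/eqP; lia.
Qed.

Lemma bounded_mono n m t : n <= m -> bounded n t -> bounded m t.
Proof. by move=> Hnm Ht j /Ht [Hle Hz]; split=> [|Hj]; [lia | apply: Hz; lia]. Qed.

Definition bounded_run (n : nat) (R : nat -> nat) : Prop :=
  forall k, bounded n (mkseq R k).

Lemma bounded_runP n R :
  bounded_run n R <-> forall j, R j <= n /\ (n <= j -> R j = 0).
Proof.
split=> H j.
  by have := H j.+1 j; rewrite size_mkseq nth_mkseq //; apply.
by move=> i; rewrite size_mkseq => Hi; rewrite nth_mkseq.
Qed.

Definition bounded_game (n : nat) : Game nat :=
  @MkGame nat (bounded n) (bounded_run n) (@bounded_take n) (@bounded_ext n)
    (fun _ HR => HR).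

Fixpoint seqs_upto (b n : nat) : seq (seq nat) :=
  if n is n'.+1 then [seq x :: s | x <- iota 0 b.+1, s <- seqs_upto b n']
  else [:: [::]].

Lemma mem_seqs_upto b s :
  (forall j, j < size s -> nth 0 s j <= b) -> s \in seqs_upto b (size s).
Proof.
elim: s => [|x s IH] //= Hs.
have Hx : x \in iota 0 b.+1 by rewrite mem_iota add0n ltnS; apply: (Hs 0).
have Hs' : s \in seqs_upto b (size s) by apply: IH => j Hj; apply: (Hs j.+1).
exact: (allpairs_f (fun x s => x :: s) Hx Hs').
Qed.

Lemma bounded_game_FT n : FT_obj (bounded_game n).
Proof.
split; last by [].
pose E := seqs_upto n n.
exists (size E), (fun i k => nth 0 (nth [::] E i) k) => R /bounded_runP HR.
have RE : mkseq R n \in E.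
  have := @mem_seqs_upto n (mkseq R n); rewrite size_mkseq; apply=> j Hj.
  by rewrite nth_mkseq //; case: (HR j).
exists (index (mkseq R n) E); first by rewrite index_mem.
move=> k; rewrite nth_index //.
case: (ltnP k n) => Hk; first by rewrite nth_mkseq.
by rewrite nth_default ?size_mkseq //; case: (HR k) => _ ->.
Qed.

Lemma trivial_game_embedding (N1 N2 : Type) (X : Game N1) (Y : Game N2) f :
  trivial_for_Alice X -> trivial_for_Alice Y -> chronological X Y f ->
  (forall s t, tree X s -> tree X t -> f s = f t -> s = t) ->
  game_embedding X Y f.
Proof.
move=> TX TY Hf Hinj; split=> // R S HR HRS; split=> _; last exact: TX.
by apply: TY => k; rewrite -HRS; case: (Hf _ (HR k)).
Qed.

Lemma bounded_game_incl n m :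
  n <= m -> game_embedding (bounded_game n) (bounded_game m) id.
Proof.
move=> Hnm; apply: trivial_game_embedding => //.
by move=> t Ht; split=> //; apply: bounded_mono Ht.
Qed.

Lemma bounded_size_sumn t : bounded (size t + sumn t) t.
Proof.
move=> j Hj; split=> [|]; last by lia.
suff : nth 0 t j <= sumn t by lia.
elim: t j {Hj} => [|x t IH] [|j] //=; first by lia.
by have := IH j; lia.
Qed.

Lemma c00_bounded_run R : c00 R -> exists n, bounded_run n R.
Proof.
move=> [N0 HN0]; exists (N0 + \max_(i < N0) R i); apply/bounded_runP => j.
case: (ltnP j N0) => Hj; last by rewrite HN0.
have : R j <= \max_(i < N0) R i := @leq_bigmax _ (fun i : 'I_N0 => R i) (Ordinal Hj).
by split=> [|]; lia.
Qed.

Lemma bounded_game_A_morphism n : A_morphism (bounded_game n) G_FL id.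
Proof.
split=> // R S /bounded_runP HR HRS; exists n => k Hk.
have -> : S k = R k.
  by have := congr1 (nth 0 ^~ k) (HRS k.+1); rewrite /= !nth_mkseq.
by case: (HR k) => _ ->.
Qed.

Lemma bounded_game_colimit :
  is_colimit_GamesA (M := fun=> nat) bounded_game (fun _ _ => id) G_FL (fun=> id).
Proof.
split=> // [n|N H psi Hpsi psi_compat]; first exact: bounded_game_A_morphism.
pose h t := psi (size t + sumn t) t.
have h_psi n t : bounded n t -> h t = psi n t.
  move=> Ht; pose m := maxn n (size t + sumn t).
  rewrite /h -(psi_compat _ m (leq_maxr _ _) t (@bounded_size_sumn t)).
  exact: (psi_compat _ m (leq_maxl _ _) t Ht).
exists h; split=> [| n t /h_psi // | h' _ h'_psi t _]; last first.
  by rewrite /h -(h'_psi _ t (@bounded_size_sumn t)).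
split=> [t _ | R S /c00_bounded_run [n HR] HRS].
  have [Ht Hsize Htake] := (Hpsi _).1 t (@bounded_size_sumn t).
  split=> // k.
  by rewrite (h_psi _ _ (bounded_take (k := k) (@bounded_size_sumn t))) Htake.
by apply: ((Hpsi n).2 _ _ HR) => k; rewrite -(h_psi _ _ (HR k)).
Qed.

Lemma node_on_run (N : Type) (X : Game N) t :
  tree X t -> exists2 R, Run X R & mkseq R (size t) = t.
Proof.
move=> Ht; have [x0 _] := tree_ext Ht.
pose next u := epsilon (inhabits x0) (fun x => tree X (rcons u x)).
have tree_next u : tree X u -> tree X (rcons u (next u)).
  by move=> Hu; exact: (epsilon_spec _ (fun x => tree X (rcons u x)) (tree_ext Hu)).
pose p k := iter k (fun u => rcons u (next u)) t.
have tree_p k : tree X (p k) by elim: k => //= k; apply: tree_next.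
have size_p k : size (p k) = size t + k.
  by elim: k => [|k IH]; rewrite ?addn0 //= size_rcons IH addnS.
have p_prefix k d : exists w, p (k + d) = p k ++ w.
  elim: d => [|d [w Hw]]; first by exists [::]; rewrite addn0 cats0.
  by exists (rcons w (next (p (k + d)))); rewrite addnS /= -/(p (k + d)) Hw rcons_cat.
pose R j := nth x0 (p j.+1) j.
have mkseq_R k : mkseq R k = take k (p k).
  apply: (eq_from_nth (x0 := x0)); first by rewrite size_mkseq size_take_min size_p; lia.
  move=> j; rewrite size_mkseq => Hj; rewrite nth_mkseq // nth_take //.
  have [w Hw] := p_prefix j.+1 (k - j.+1).
  rewrite (_ : k = j.+1 + (k - j.+1)); last by lia.
  by rewrite /R Hw nth_cat size_p; case: ltnP => //; lia.
exists R => [k|]; first by rewrite mkseq_R; apply: tree_closed.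
have [w Hw] := p_prefix 0 (size t).
by rewrite mkseq_R -[size t]add0n Hw take_size_cat.
Qed.

Lemma uniform_bound (Q : nat -> nat -> Prop) :
  (forall i L L', L <= L' -> Q i L -> Q i L') -> (forall i, exists L, Q i L) ->
  forall n, exists L, forall i, i < n -> Q i L.
Proof.
move=> Qmono Qex; elim=> [|n [L HL]]; first by exists 0.
have [L' HL'] := Qex n; exists (maxn L L') => i; rewrite ltnS leq_eqVlt.
case/orP=> [/eqP ->|Hi]; first exact: Qmono (leq_maxr _ _) HL'.
exact: Qmono (leq_maxl _ _) (HL i Hi).
Qed.

Section FiniteGame.

Variables (N : Type) (X : Game N) (Nn : nat) (e : nat -> nat -> N).
Hypothesis e_runs : forall R, Run X R -> exists2 i, i < Nn & forall k, R k = e i k.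

Lemma node_enum u : tree X u -> exists2 i, i < Nn & mkseq (e i) (size u) = u.
Proof.
case/node_on_run=> R /e_runs [i Hi ERe] <-; exists i => //.
by rewrite size_mkseq; apply: eq_mkseq => k; rewrite ERe.
Qed.

Lemma enum_separation_depth : exists L, forall i, i < Nn -> forall j, j < Nn ->
  (forall k, k < L -> e i k = e j k) -> forall k, e i k = e j k.
Proof.
apply: (@uniform_bound (fun i L => forall j, j < Nn ->
  (forall k, k < L -> e i k = e j k) -> forall k, e i k = e j k)).
  by move=> i L L' HL H j Hj Hag; apply: H => // k Hk; apply: Hag; lia.
move=> i; apply: (@uniform_bound (fun j L =>
  (forall k, k < L -> e i k = e j k) -> forall k, e i k = e j k)).
  by move=> j L L' HL H Hag; apply: H => k Hk; apply: Hag; lia.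
move=> j.
case: (classic (forall k, e i k = e j k)) => [Heq | /not_all_ex_not [k Hk]].
  by exists 0.
by exists k.+1 => Hag; exfalso; apply/Hk/Hag.
Qed.

Lemma branching_depth : exists L, forall u1 u2 k, tree X u1 -> tree X u2 ->
  size u1 = k.+1 -> size u2 = k.+1 -> take k u1 = take k u2 -> u1 <> u2 -> k < L.
Proof.
have [L HL] := enum_separation_depth; exists L => u1 u2 k T1 T2 S1 S2 Ek Ne.
have [i1 Hi1 E1] := node_enum T1; have [i2 Hi2 E2] := node_enum T2.
rewrite S1 in E1; rewrite S2 in E2.
rewrite ltnNge; apply/negP => HLk; apply: Ne.
have Hag k' : k' < L -> e i1 k' = e i2 k'.
  move=> Hk'; have Hk : k' < k by lia.
  have := congr1 (nth (e i1 0) ^~ k') Ek; rewrite /= !nth_take //.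
  by rewrite -E1 -E2 !nth_mkseq // ltnW.
by rewrite -E1 -E2; apply: eq_mkseq; exact: HL Hi1 _ Hi2 Hag.
Qed.

End FiniteGame.

Section LabelSeq.

Variables (N : Type) (lab : seq N -> nat).

Definition label_seq (t : seq N) : seq nat := mkseq (fun j => lab (take j.+1 t)) (size t).

Lemma size_label_seq t : size (label_seq t) = size t.
Proof. exact: size_mkseq. Qed.

Lemma nth_label_seq t j : j < size t -> nth 0 (label_seq t) j = lab (take j.+1 t).
Proof. exact: nth_mkseq. Qed.

Lemma take_label_seq t k : label_seq (take k t) = take k (label_seq t).
Proof.
apply: (eq_from_nth (x0 := 0)); first by rewrite size_take !size_label_seq size_take.
rewrite size_label_seq size_take_min => j Hj.
rewrite nth_take; last by lia.
by rewrite !nth_label_seq ?size_take_min ?take_takel //; lia.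
Qed.

Definition separates_siblings (X : Game N) : Prop :=
  forall u1 u2 k, tree X u1 -> tree X u2 -> size u1 = k.+1 -> size u2 = k.+1 ->
    take k u1 = take k u2 -> lab u1 = lab u2 -> u1 = u2.

Lemma label_seq_inj (X : Game N) : separates_siblings X ->
  forall s t, tree X s -> tree X t -> label_seq s = label_seq t -> s = t.
Proof.
move=> Hsep s t Ts Tt Est.
have Hsize : size s = size t by rewrite -size_label_seq Est size_label_seq.
suff Htake k : k <= size s -> take k s = take k t.
  by rewrite -(take_size s) Htake // Hsize take_size.
elim: k => [|k IH] Hk; first by rewrite !take0.
apply: (Hsep _ _ k); do ?[exact: tree_closed | rewrite size_takel; lia].
  by rewrite !take_takel ?IH //; lia.
have := congr1 (nth 0 ^~ k) Est; rewrite !nth_label_seq //; lia.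
Qed.

Lemma label_seq_chronological (X : Game N) m :
  (forall u, tree X u -> 0 < size u -> lab u <= m /\ (m < size u -> lab u = 0)) ->
  chronological X (bounded_game m) label_seq.
Proof.
move=> Hlab t Tt; split=> [j||k]; rewrite ?size_label_seq ?take_label_seq // => Hj.
have := Hlab (take j.+1 t) (tree_closed j.+1 Tt); rewrite size_takel //.
by rewrite nth_label_seq //; apply.
Qed.

Lemma label_seq_comp (f : seq nat -> seq N) s :
  size (f s) = size s -> (forall k, f (take k s) = take k (f s)) ->
  (forall j, j < size s -> lab (f (take j.+1 s)) = nth 0 s j) ->
  label_seq (f s) = s.
Proof.
move=> Hsize Htake Hlab; apply: (eq_from_nth (x0 := 0)); rewrite size_label_seq //.
by rewrite Hsize => j Hj; rewrite nth_label_seq ?Hsize // -Htake Hlab.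
Qed.

End LabelSeq.

Lemma last_take_succ (T : Type) (x0 : T) s j :
  j < size s -> last x0 (take j.+1 s) = nth x0 s j.
Proof. by move=> Hj; rewrite (take_nth x0) // last_rcons. Qed.

Lemma eq_take_last (T : Type) (x0 : T) s1 s2 k : size s1 = k.+1 -> size s2 = k.+1 ->
  take k s1 = take k s2 -> last x0 s1 = last x0 s2 -> s1 = s2.
Proof.
case/lastP: s1 => [|t1 x1]; case/lastP: s2 => [|t2 x2]; rewrite ?size_rcons //.
by move=> [S1] [S2]; rewrite -!cats1 !take_size_cat // !last_cat /= => -> ->.
Qed.

Lemma last_bounded n s : bounded n s -> 0 < size s -> last 0 s <= n.
Proof. by move=> Hs Hsize; rewrite -nth_last; case: (Hs (size s).-1 _) => //; lia. Qed.

Section ExtensionLabel.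

Variables (N : Type) (X : Game N) (Nn : nat) (e : nat -> nat -> N) (n L : nat).
Variables (D : seq nat -> Prop) (f : seq nat -> seq N).
Hypothesis e_runs : forall R, Run X R -> exists2 i, i < Nn & forall k, R k = e i k.
Hypothesis X_branching : forall u1 u2 k, tree X u1 -> tree X u2 ->
  size u1 = k.+1 -> size u2 = k.+1 -> take k u1 = take k u2 -> u1 <> u2 -> k < L.
Hypothesis D_bounded : forall s, D s -> bounded n s.
Hypothesis D_take : forall s k, D s -> D (take k s).
Hypothesis f_chrono : forall s, D s ->
  [/\ tree X (f s), size (f s) = size s & forall k, f (take k s) = take k (f s)].
Hypothesis f_inj : forall s t, D s -> D t -> f s = f t -> s = t.

Let m := n + Nn + L.

Definition in_image (u : seq N) : Prop := exists2 s, D s & f s = u.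

Let preimage u := epsilon (inhabits [::]) (fun s => D s /\ f s = u).
Let run_index u := epsilon (inhabits 0) (fun i => i < Nn /\ mkseq (e i) (size u) = u).

Lemma preimage_spec u : in_image u -> D (preimage u) /\ f (preimage u) = u.
Proof.
case=> s Ds Es.
exact: (epsilon_spec _ (fun s => D s /\ f s = u) (ex_intro _ s (conj Ds Es))).
Qed.

Lemma run_index_spec u :
  tree X u -> run_index u < Nn /\ mkseq (e (run_index u)) (size u) = u.
Proof.
move=> /(node_enum e_runs) [i Hi Ei].
exact: (epsilon_spec _ (fun i => i < Nn /\ _) (ex_intro _ i (conj Hi Ei))).
Qed.

(* Labels of image nodes are at most n and those of other nodes exceed n, so
   the two kinds never collide. *)
Definition node_label (u : seq N) : nat :=
  if excluded_middle_informative (in_image u) then last 0 (preimage u)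
  else n.+1 + run_index u.

Definition extension_label (u : seq N) : nat := if m < size u then 0 else node_label u.

Lemma extension_label_image s :
  D s -> size s <= m -> extension_label (f s) = last 0 s.
Proof.
move=> Ds Hs; have [_ Hsize _] := f_chrono Ds.
rewrite /extension_label Hsize ltnNge Hs /= /node_label.
destruct (excluded_middle_informative (in_image (f s))) as [Hin|Hn]; last first.
  by case: Hn; exists s.
have [Ds' Es'] := preimage_spec Hin.
by rewrite (f_inj Ds' Ds Es').
Qed.

Lemma extension_label_outside u : tree X u -> size u <= m -> ~ in_image u ->
  exists i, [/\ i < Nn, mkseq (e i) (size u) = u & extension_label u = n.+1 + i].
Proof.
move=> Tu Hu Hni; rewrite /extension_label ltnNge Hu /= /node_label.
destruct (excluded_middle_informative (in_image u)) as [Hin|Hout]; first by [].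
by have [Hi Ei] := run_index_spec Tu; exists (run_index u).
Qed.

Lemma extension_label_bounded u : tree X u -> 0 < size u ->
  extension_label u <= m /\ (m < size u -> extension_label u = 0).
Proof.
move=> Tu Hu0; case: (ltnP m (size u)) => Hum.
  by rewrite /extension_label Hum.
split=> [|]; last by lia.
case: (classic (in_image u)) => [[s Ds Es]|Hni].
  have [_ Hsize _] := f_chrono Ds; rewrite -Es Hsize in Hu0 Hum.
  rewrite -Es extension_label_image //.
  by have := last_bounded (D_bounded Ds) Hu0; rewrite /m; lia.
have [i [Hi _ ->]] := extension_label_outside Tu Hum Hni.
by rewrite /m; lia.
Qed.

Lemma extension_label_separates : separates_siblings extension_label X.
Proof.
move=> u1 u2 k T1 T2 S1 S2 Ek El; apply: NNPP => Ne.
have HkL := X_branching T1 T2 S1 S2 Ek Ne.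
have [H1 H2] : size u1 <= m /\ size u2 <= m by rewrite S1 S2 /m; split; lia.
have image_label s u : D s -> f s = u -> size u = k.+1 ->
    extension_label u = last 0 s /\ last 0 s <= n.
  move=> Ds <- Hs; have [_ Hsize _] := f_chrono Ds; rewrite Hsize in Hs.
  have Hsm : size s <= m by rewrite Hs /m; lia.
  split; first exact: extension_label_image.
  by apply: last_bounded (D_bounded Ds) _; rewrite Hs.
case: (classic (in_image u1)) => [[s1 D1 E1]|N1];
  case: (classic (in_image u2)) => [[s2 D2 E2]|N2].
- have [El1 _] := image_label _ _ D1 E1 S1; have [El2 _] := image_label _ _ D2 E2 S2.
  have [_ Sz1 Tk1] := f_chrono D1; have [_ Sz2 Tk2] := f_chrono D2.
  apply: Ne; rewrite -E1 -E2; congr f.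
  apply: (eq_take_last (x0 := 0) (k := k)); rewrite -?Sz1 -?Sz2 ?E1 ?E2 -?El1 -?El2 //.
  by apply: f_inj; rewrite ?Tk1 ?Tk2 ?E1 ?E2 //; apply: D_take.
- have [El1 Hle] := image_label _ _ D1 E1 S1.
  by have [i [_ _ Ei]] := extension_label_outside T2 H2 N2; lia.
- have [El2 Hle] := image_label _ _ D2 E2 S2.
  by have [i [_ _ Ei]] := extension_label_outside T1 H1 N1; lia.
- have [i1 [_ Ei1 El1]] := extension_label_outside T1 H1 N1.
  have [i2 [_ Ei2 El2]] := extension_label_outside T2 H2 N2.
  by apply: Ne; rewrite -Ei1 -Ei2 S1 S2 (_ : i1 = i2) //; lia.
Qed.

Lemma extension_label_comp s : D s -> label_seq extension_label (f s) = s.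
Proof.
move=> Ds; have [_ Hsize Htake] := f_chrono Ds.
apply: label_seq_comp => // j Hj.
have Dj := D_take j.+1 Ds; have [_ Hsizej _] := f_chrono Dj.
have Sj : size (take j.+1 s) = j.+1 by rewrite size_takel.
case: (ltnP j m) => Hjm.
  by rewrite extension_label_image ?Sj // last_take_succ.
rewrite /extension_label Hsizej Sj ltnS Hjm /=.
by case: (D_bounded Ds Hj) => _ -> //; rewrite /m in Hjm; lia.
Qed.

End ExtensionLabel.

Lemma FT_extension (N : Type) (X : Game N) n (D : seq nat -> Prop) (f : seq nat -> seq N) :
  FT_obj X -> (forall s, D s -> bounded n s) -> (forall s k, D s -> D (take k s)) ->
  (forall s, D s ->
     [/\ tree X (f s), size (f s) = size s & forall k, f (take k s) = take k (f s)]) ->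
  (forall s t, D s -> D t -> f s = f t -> s = t) ->
  exists m (g : seq N -> seq nat),
    [/\ n <= m, game_embedding X (bounded_game m) g & forall s, D s -> g (f s) = s].
Proof.
move=> [[Nn [e e_runs]] X_trivial] D_bounded D_take f_chrono f_inj.
have [L X_branching] := branching_depth e_runs.
exists (n + Nn + L), (label_seq (extension_label Nn e n L D f)); split.
- by lia.
- apply: trivial_game_embedding => //.
    apply: label_seq_chronological => u Tu.
    exact: (extension_label_bounded L e_runs D_bounded f_chrono f_inj Tu).
  apply: label_seq_inj.
  exact: (extension_label_separates e_runs X_branching D_bounded D_take f_chrono f_inj).
- move=> s Ds.
  exact: (extension_label_comp Nn e L D_bounded D_take f_chrono f_inj Ds).
Qed.

Lemma bounded_games_fraisse : fraisse_sequence (M := fun=> nat) bounded_game (fun _ _ => id).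
Proof.
split; first by split=> //; [exact: bounded_game_FT | exact: bounded_game_incl].
split.
- move=> N X HX.
  have [m [g [_ Hg _]]] :=
    @FT_extension N X 0 (fun=> False) (fun=> [::]) HX
      (fun _ => False_ind _) (fun _ _ => False_ind _) (fun _ => False_ind _) (fun _ _ => False_ind _).
  by exists m, g.
- move=> n N X f HX [f_chrono f_inj _].
  have [m [g [Hnm Hg Hgf]]] :=
    FT_extension HX (fun _ Hs => Hs) (@bounded_take n) f_chrono f_inj.
  by exists m, g; split=> // t Ht; apply: Hgf.
Qed.

Theorem mainTheorem11 :
  exists (M : nat -> Type) (F : forall n, Game (M n))
         (Fmap : forall n m, seq (M n) -> seq (M m))
         (phi : forall n, seq (M n) -> seq nat),
    fraisse_sequence F Fmap /\ is_colimit_GamesA F Fmap G_FL phi.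
Proof.
exists (fun=> nat), bounded_game, (fun _ _ => id), (fun=> id).
by split; [exact: bounded_games_fraisse | exact: bounded_game_colimit].
Qed.
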